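(* Let $1\le l_1\le l_2\le\cdots\le l_n$ be integers and $A=\{a_1^{2^{l_1}-1},\ldots,a_n^{2^{l_n}-1}\}$. Then for every integer $m\ge0$, $$|C_m(A)|=\sum\prod_{i=1}^{l_n}\binom{\overline{k_{2^{i-1}}}}{\lambda_i},$$ the sum over all tuples $(\lambda_1,\ldots,\lambda_{l_n})$ of non-negative integers with $\lambda_1+2\lambda_2+2^2\lambda_3+\cdots+2^{l_n-1}\lambda_{l_n}=m$ and $\lambda_i\le\overline{k_{2^{i-1}}}$ for $i=1,\ldots,l_n$.
   Context: A multiset $A=\{a_1^{k_1},\ldots,a_n^{k_n}\}$ consists of distinct elements $a_1,\ldots,a_n$ with positive integer multiplicities $k_1,\ldots,k_n$ (here $k_i=2^{l_i}-1$). A submultiset of $A$ is a multiset $\{a_1^{r_1},\ldots,a_n^{r_n}\}$ with integers $0\le r_i\le k_i$, of cardinality $r_1+\cdots+r_n$. $C_m(A)$ denotes the set of all submultisets of $A$ of cardinality $m$. For each integer $j\ge1$, $\overline{k_j}=|\{i\in\{1,\ldots,n\}: k_i\ge j\}|$. *)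

From mathcomp Require Import all_boot.
Set Implicit Arguments. Unset Strict Implicit. Unset Printing Implicit Defensive.

(* A multiset A = {a_1^{k_1},...,a_N^{k_N}} with distinct elements is determined
   by its multiplicity vector k : 'I_N -> nat.  A submultiset is given by its
   multiplicity vector r with 0 <= r_i <= k_i; we encode r as a finite function
   into 'I_(kmax.+1), kmax = max_i k_i (big enough to hold every allowed r_i). *)
Definition kmax N (k : 'I_N -> nat) : nat := \max_(i < N) k i.

Definition C_m N (k : 'I_N -> nat) (m : nat) : {set {ffun 'I_N -> 'I_(kmax k).+1}} :=
  [set r : {ffun 'I_N -> 'I_(kmax k).+1} | [forall i, (r i : nat) <= k i] & (\sum_(i < N) (r i : nat) == m)].

Definition kbar N (k : 'I_N -> nat) (j : nat) : nat := #|[set i : 'I_N | j <= k i]|.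

From mathcomp Require Import all_boot.
From mathcomp Require Import zify.
Set Implicit Arguments. Unset Strict Implicit. Unset Printing Implicit Defensive.

(* A submultiset r of A satisfies 0 <= r_i <= 2^{l_i} - 1, i.e. r_i < 2^{l_i},
   so r_i is exactly an l_i-digit binary number.  Reading off the j-th binary
   digit of every r_i yields a set S_j = {i | digit j of r_i is 1}, and
     - S_j is contained in K_j = {i | 2^j <= k_i}, whose size is kbar_{2^j};
     - sum_i r_i = sum_j 2^j |S_j|.
   Conversely every family (S_j)_{j < L} with S_j \subset K_j comes from a
   unique submultiset.  Hence |C_m(A)| counts the families with S_j \subset K_j
   and sum_j 2^j |S_j| = m.  Grouping these families by their size vector
   lambda_j = |S_j| and choosing each S_j independently among the
   lambda_j-subsets of K_j gives the product of binomials. *)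

Definition bin L (b : nat -> bool) : nat := \sum_(j < L) 2 ^ j * b j.

Lemma eq_bin L b c : (forall j, b j = c j) -> bin L b = bin L c.
Proof. by move=> h; apply: eq_bigr => j _; rewrite h. Qed.

Lemma binS L b : bin L.+1 b = b 0 + 2 * bin L (fun j => b j.+1).
Proof.
rewrite /bin big_ord_recl /= expn0 mul1n big_distrr /=; congr (_ + _).
by apply: eq_bigr => j _; rewrite expnS mulnA.
Qed.

Lemma bin_lt L b : bin L b < 2 ^ L.
Proof.
elim: L b => [|L IH] b; first by rewrite /bin big_ord0.
rewrite binS expnS; have := IH (fun j => b j.+1); case: (b 0) => /=; lia.
Qed.

Lemma bin_low L l b : (forall j, l <= j -> b j = false) -> bin L b < 2 ^ l.
Proof.
move=> hb; elim: L => [|L IH]; first by rewrite /bin big_ord0 expn_gt0.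
case: (leqP L.+1 l) => hL; first by apply: leq_trans (bin_lt _ _) _; rewrite leq_exp2l.
by rewrite /bin big_ord_recr /= hb ?muln0 ?addn0.
Qed.

Definition digit (r t : nat) : bool := odd (r %/ 2 ^ t).

Lemma digit_bin L b t : t < L -> digit (bin L b) t = b t.
Proof.
rewrite /digit; elim: t L b => [|t IH] [|L] b //= ht.
  by rewrite expn0 divn1 binS oddD oddM /=; case: (b 0).
rewrite binS expnS divnMA.
have -> : (b 0 + 2 * bin L (fun j => b j.+1)) %/ 2 = bin L (fun j => b j.+1).
  by rewrite divnDr ?dvdn_mulr // mulKn // divn_small ?add0n //; case: (b 0).
by rewrite IH.
Qed.

Lemma bin_digit L r : r < 2 ^ L -> bin L (digit r) = r.
Proof.
elim: L r => [|L IH] r hr.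
  by rewrite /bin big_ord0; move: hr; rewrite expn0; case: r.
rewrite binS /digit expn0 divn1.
rewrite (@eq_bin L _ (digit (r %/ 2))); last by move=> j; rewrite /digit expnS divnMA.
rewrite IH; last by rewrite ltn_divLR // mulnC -expnS.
by rewrite divn2 -[RHS]odd_double_half -muln2 mulnC.
Qed.

Lemma weighted_card_sum (I : finType) L (w : nat -> nat) (S : 'I_L -> {set I}) :
  \sum_(i : I) \sum_(j < L) w j * (i \in S j) = \sum_(j < L) w j * #|S j|.
Proof.
rewrite exchange_big /=; apply: eq_bigr => j _.
rewrite -sum1_card big_distrr /= [RHS]big_mkcond /=.
by apply: eq_bigr => i _; case: (i \in S j); rewrite ?muln1 ?muln0.
Qed.

Section FamiliesBySize.

Variables (I J : finType) (M : nat) (K : J -> {set I}).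
Hypothesis card_I_le : #|I| <= M.

Definition sizes (S : {ffun J -> {set I}}) : {ffun J -> 'I_M.+1} :=
  [ffun j => inord #|S j|].

Lemma sizesE S j : sizes S j = #|S j| :> nat.
Proof. by rewrite ffunE inordK // ltnS; apply: leq_trans (max_card _) _. Qed.

(* Families with a prescribed size vector are chosen coordinatewise. *)
Lemma card_families_of_size (lam : {ffun J -> 'I_M.+1}) :
  #|[set S : {ffun J -> {set I}} | [forall j, S j \subset K j] & sizes S == lam]|
  = \prod_(j : J) 'C(#|K j|, lam j).
Proof.
pose F j := [pred T : {set I} | (T \subset K j) && (#|T| == lam j)].
transitivity #|(family F : simpl_pred {ffun J -> {set I}})|.
  apply: eq_card => S; rewrite inE; apply/andP/familyP.
    by move=> [/forallP hS /eqP hlam] j; rewrite inE hS -hlam sizesE /=.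
  move=> hF; split; first by apply/forallP => j; have /andP[] := hF j.
  by apply/eqP/ffunP => j; apply: val_inj; rewrite /= sizesE; have /andP[_ /eqP] := hF j.
rewrite card_family foldrE big_image /=; apply: eq_bigr => j _.
by rewrite -cards_draws; apply: eq_card => T; rewrite !inE.
Qed.

(* Summing over size vectors: each admissible size vector is bounded by #|K|. *)
Lemma card_families_by_size (P : pred {ffun J -> 'I_M.+1}) :
  #|[set S : {ffun J -> {set I}} | [forall j, S j \subset K j] & P (sizes S)]|
  = \sum_(lam | P lam && [forall j, (lam j : nat) <= #|K j|])
      \prod_(j : J) 'C(#|K j|, lam j).
Proof.
rewrite -sum1_card (partition_big sizes
  (fun lam => P lam && [forall j, (lam j : nat) <= #|K j|])); last first.
  move=> S; rewrite inE => /andP[/forallP hS ->] /=.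
  by apply/forallP => j; rewrite sizesE subset_leq_card.
apply: eq_bigr => lam /andP[Plam _]; rewrite -card_families_of_size sum1_card.
apply: eq_card => S; rewrite unfold_in !inE.
by case: eqP => [->|]; rewrite ?Plam ?andbT ?andbF.
Qed.

End FamiliesBySize.

Section DigitBijection.

Variables (N L : nat) (l : 'I_N -> nat) (k : 'I_N -> nat).
Hypothesis k_def : forall i, k i = 2 ^ l i - 1.
Hypothesis l_le : forall i, l i <= L.

Lemma leq_k x i : (x <= k i) = (x < 2 ^ l i).
Proof. by rewrite k_def; have := expn_gt0 2 (l i); lia. Qed.

Definition digit_support (j : nat) : {set 'I_N} := [set i | 2 ^ j <= k i].

Definition digit_families (m : nat) : {set {ffun 'I_L -> {set 'I_N}}} :=
  [set S : {ffun 'I_L -> {set 'I_N}} | [forall j, S j \subset digit_support j] &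
           \sum_(j < L) 2 ^ j * #|S j| == m].

Definition digit_sets (r : {ffun 'I_N -> 'I_(kmax k).+1}) : {ffun 'I_L -> {set 'I_N}} :=
  [ffun j : 'I_L => [set i | digit (r i) j]].

Definition membership (S : {ffun 'I_L -> {set 'I_N}}) (i : 'I_N) (j : nat) : bool :=
  if insub j is Some j' then i \in S j' else false.

Lemma membership_val S i (j : 'I_L) : membership S i j = (i \in S j).
Proof. by rewrite /membership valK. Qed.

Lemma sub_C_m_lt m r : r \in C_m k m -> forall i, (r i : nat) < 2 ^ L.
Proof.
rewrite inE => /andP[/forallP hr _] i.
by apply: leq_trans (_ : 2 ^ l i <= _); rewrite -?leq_k ?leq_exp2l.
Qed.

Lemma digit_sets_expand m r : r \in C_m k m -> forall i,
  (r i : nat) = \sum_(j < L) 2 ^ j * (i \in digit_sets r j).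
Proof.
move=> hr i; rewrite -{1}(bin_digit (sub_C_m_lt hr i)).
by apply: eq_bigr => j _; rewrite ffunE inE.
Qed.

Lemma digit_sets_inj m : {in C_m k m &, injective digit_sets}.
Proof.
move=> r1 r2 h1 h2 e; apply/ffunP => i; apply: val_inj.
by rewrite /= (digit_sets_expand h1) (digit_sets_expand h2) e.
Qed.

(* Digit j of r_i can only be set when 2^j <= r_i <= k_i, and the weight of
   the digit family is the cardinality of r. *)
Lemma digit_sets_family m r : r \in C_m k m -> digit_sets r \in digit_families m.
Proof.
move=> hr; move: (hr); rewrite !inE => /andP[/forallP hk /eqP <-].
apply/andP; split.
  apply/forallP => j; apply/subsetP => i; rewrite ffunE !inE /digit => hodd.
  have : 0 < r i %/ 2 ^ j by move: hodd; case: (r i %/ 2 ^ j).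
  by rewrite divn_gt0 ?expn_gt0 // => /leq_trans; apply.
rewrite -weighted_card_sum; apply/eqP/eq_bigr => i _.
by rewrite -(digit_sets_expand hr).
Qed.

(* Every admissible family is the digit family of a submultiset: the
   multiplicity of i is the binary number read off from the membership of i. *)
Lemma digit_families_sets m S : S \in digit_families m ->
  exists2 r, r \in C_m k m & S = digit_sets r.
Proof.
rewrite inE => /andP[/forallP hSK /eqP hm].
have bin_lt_l i : bin L (membership S i) < 2 ^ l i.
  apply: bin_low => j hj; rewrite /membership; case: insubP => // j' _ hj'.
  apply/negP => /(subsetP (hSK j')); rewrite inE hj' leq_k ltn_exp2l //.
  by rewrite ltnNge hj.
pose r : {ffun 'I_N -> 'I_(kmax k).+1} := [ffun i => inord (bin L (membership S i))].
have rE i : (r i : nat) = bin L (membership S i).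
  rewrite ffunE inordK // ltnS; apply: leq_trans (leq_bigmax i).
  by rewrite leq_k.
exists r.
  rewrite inE; apply/andP; split; first by apply/forallP => i; rewrite rE leq_k.
  rewrite -hm -weighted_card_sum; apply/eqP/eq_bigr => i _.
  by rewrite rE; apply: eq_bigr => j _; rewrite membership_val.
apply/ffunP => j; apply/setP => i.
by rewrite !ffunE inE rE digit_bin // membership_val.
Qed.

Lemma card_C_m_digit_families m : #|C_m k m| = #|digit_families m|.
Proof.
rewrite -(card_in_imset (@digit_sets_inj m)); apply: eq_card => S.
apply/imsetP/idP => [[r hr ->]|hS].
  exact: digit_sets_family.
by have [r hr ->] := digit_families_sets hS; exists r.
Qed.

End DigitBijection.

Theorem theorem5p3 (n : nat) (l : 'I_n.+1 -> nat)
  (hl1 : forall i, 1 <= l i)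
  (hmono : forall i j : 'I_n.+1, i <= j -> l i <= l j)
  (m : nat) :
  let k := fun i => 2 ^ l i - 1 in
  let L := l ord_max in
  #|C_m k m| =
  \sum_(lam : {ffun 'I_L -> 'I_(n.+2)} |
          (\sum_(i < L) 2 ^ i * lam i == m) &&
          [forall i : 'I_L, (lam i : nat) <= kbar k (2 ^ i)])
     \prod_(i < L) 'C(kbar k (2 ^ i), lam i).
Proof.
move=> k L.
have l_le i : l i <= L by apply: hmono; apply: leq_ord.
have card_le : #|'I_n.+1| <= n.+1 by rewrite card_ord.
rewrite (card_C_m_digit_families (k := k) (fun i => erefl) l_le).
rewrite -(card_families_by_size (fun j : 'I_L => digit_support k j) card_le
            (fun lam => \sum_(i < L) 2 ^ i * lam i == m)).
apply: eq_card => S; rewrite !inE; congr (_ && (_ == m)).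
by apply: eq_bigr => j _; rewrite sizesE.
Qed.
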